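(* Let $\lambda_0,\dots,\lambda_n\in\mathbb{C}$, $n\ge1$, and $a\neq b$ real, and suppose $E_{(\lambda_0,\dots,\lambda_n)}$ and $E_{(\lambda_0,\dots,\lambda_{n-1})}$ are extended Chebyshev systems for $\{a,b\}$. For $k=0,\dots,n-1$ the limit $$d_k:=\lim_{x\to b}\frac{\frac{d}{dx}p_{(\lambda_0,\dots,\lambda_n),k}(x)}{p_{(\lambda_0,\dots,\lambda_{n-1}),k}(x)}$$ exists and is nonzero, and $$\Big(\frac{d}{dx}-\lambda_n\Big)p_{(\lambda_0,\dots,\lambda_n),k}=p_{(\lambda_0,\dots,\lambda_{n-1}),k-1}+d_k\,p_{(\lambda_0,\dots,\lambda_{n-1}),k}\quad\text{for }k=1,\dots,n-1,$$ while $(\frac{d}{dx}-\lambda_n)p_{(\lambda_0,\dots,\lambda_n),0}=d_0\,p_{(\lambda_0,\dots,\lambda_{n-1}),0}$ and $(\frac{d}{dx}-\lambda_n)p_{(\lambda_0,\dots,\lambda_n),n}=p_{(\lambda_0,\dots,\lambda_{n-1}),n-1}$.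
   Context: $E_{(\lambda_0,\dots,\lambda_m)}$ denotes the space of all $f\in C^\infty(\mathbb{R},\mathbb{C})$ with $(\frac{d}{dx}-\lambda_0)\cdots(\frac{d}{dx}-\lambda_m)f=0$ (dimension $m+1$). A zero of order (exactly) $k$ at $a$ means $f(a)=\dots=f^{(k-1)}(a)=0$, $f^{(k)}(a)\neq0$. $E_{(\lambda_0,\dots,\lambda_m)}$ is an extended Chebyshev system for $A\subset\mathbb{R}$ if every nonzero element has at most $m$ zeros in $A$ counted with multiplicity. In that case, for $A=\{a,b\}$, $a\ne b$, the Bernstein basis $p_{(\lambda_0,\dots,\lambda_m),k}$, $k=0,\dots,m$, is the unique family in $E_{(\lambda_0,\dots,\lambda_m)}$ with $p_{(\lambda_0,\dots,\lambda_m),k}$ having a zero of order exactly $k$ at $a$ and exactly $m-k$ at $b$, and $p^{(k)}_{(\lambda_0,\dots,\lambda_m),k}(a)=1$. *)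

From Stdlib Require Export Reals.
Open Scope R_scope.

Definition Cx : Type := (R * R)%type.
Definition C0 : Cx := (0, 0).
Definition C1 : Cx := (1, 0).
Definition Cadd (z w : Cx) : Cx := (fst z + fst w, snd z + snd w).
Definition Copp (z : Cx) : Cx := (- fst z, - snd z).
Definition Csub (z w : Cx) : Cx := Cadd z (Copp w).
Definition Cmul (z w : Cx) : Cx :=
  (fst z * fst w - snd z * snd w, fst z * snd w + snd z * fst w).
Definition Cnorm2 (z : Cx) : R := fst z * fst z + snd z * snd z.
Definition Cinv (z : Cx) : Cx := (fst z / Cnorm2 z, - snd z / Cnorm2 z).
Definition Cdiv (z w : Cx) : Cx := Cmul z (Cinv w).
Definition Cnorm (z : Cx) : R := sqrt (Cnorm2 z).

Definition is_deriv (f g : R -> Cx) : Prop :=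
  forall x, derivable_pt_lim (fun t => fst (f t)) x (fst (g x)) /\
            derivable_pt_lim (fun t => snd (f t)) x (snd (g x)).

Definition derseq (f : R -> Cx) (F : nat -> R -> Cx) : Prop :=
  (forall x, F 0%nat x = f x) /\ forall j, is_deriv (F j) (F (S j)).

Definition smooth (f : R -> Cx) : Prop := exists F, derseq f F.

(** ann lam m f : (d/dx - lam 0) ... (d/dx - lam m) f = 0,
    the rightmost factor (d/dx - lam m) being applied first. *)
Fixpoint ann (lam : nat -> Cx) (m : nat) (f : R -> Cx) : Prop :=
  match m with
  | O => exists g, is_deriv f g /\ forall x, Csub (g x) (Cmul (lam 0%nat) (f x)) = C0
  | S m' => exists g, is_deriv f g /\
              ann lam m' (fun x => Csub (g x) (Cmul (lam (S m')) (f x)))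
  end.

Definition inE (lam : nat -> Cx) (m : nat) (f : R -> Cx) : Prop :=
  smooth f /\ ann lam m f.

Definition vanishes_to (f : R -> Cx) (a : R) (k : nat) : Prop :=
  exists F, derseq f F /\ forall j, (j < k)%nat -> F j a = C0.

Definition zero_order (f : R -> Cx) (a : R) (k : nat) : Prop :=
  exists F, derseq f F /\ (forall j, (j < k)%nat -> F j a = C0) /\ F k a <> C0.

Definition deriv_at (f : R -> Cx) (k : nat) (a : R) (v : Cx) : Prop :=
  exists F, derseq f F /\ F k a = v.

(** E_(lam 0..lam m) is an extended Chebyshev system for {a, b}:
    every nonzero element has at most m zeros in {a,b} counted with multiplicity. *)
Definition ECT_ab (lam : nat -> Cx) (m : nat) (a b : R) : Prop :=
  forall f, inE lam m f -> (exists x, f x <> C0) ->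
    forall i j, vanishes_to f a i -> vanishes_to f b j -> (i + j <= m)%nat.

Definition bernstein_basis (lam : nat -> Cx) (m : nat) (a b : R)
    (p : nat -> R -> Cx) : Prop :=
  forall k, (k <= m)%nat ->
    inE lam m (p k) /\ zero_order (p k) a k /\ zero_order (p k) b (m - k) /\
    deriv_at (p k) k a C1.

Definition Clim (h : R -> Cx) (b : R) (l : Cx) : Prop :=
  forall eps, 0 < eps -> exists delta, 0 < delta /\
    forall x, x <> b -> Rabs (x - b) < delta -> Cnorm (Csub (h x) l) < eps.

From Pilot Require Import Defs.
From Stdlib Require Import Reals Lra Lia Factorial Classical FunctionalExtensionality IndefiniteDescription.
Open Scope R_scope.

(* Write n = n'+1, let p_k and q_k be the Bernstein bases of E_(lam 0..lam n) and
   E_(lam 0..lam n') for {a,b}, and h_k := (d/dx - lam n) p_k.  Two facts carry the proof.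
   - The operator d/dx - lam n maps E_(lam 0..lam n) into E_(lam 0..lam n'), and the j-th
     derivative of h_k is p_k^(j+1) - lam n p_k^(j); hence wherever p_k vanishes to order r,
     h_k^(j) = p_k^(j+1) for j < r.  This gives the derivative data of h_k at a and at b.
   - Hermite uniqueness: in an extended Chebyshev space E_(lam 0..lam m) an element vanishing
     to orders i at a and j at b with i + j > m is zero.
   With d_k := p_k^(n-k)(b) / q_k^(n'-k)(b), the functions h_k and q_(k-1) + d_k q_k have the
   same derivatives at a up to order k and at b up to order n'-k+1, hence coincide; the cases
   k = 0 and k = n are analogous.  The limit is a l'Hopital rule proved from the Lagrange form
   of Taylor's theorem applied to the real and imaginary parts.  Only the Chebyshev property
   of the smaller space E_(lam 0..lam n') is needed. *)

Ltac Csolve :=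
  unfold Csub, Cadd, Copp, Cmul, C0, Defs.C1 in *; apply injective_projections; simpl; ring.

(** * Complex arithmetic *)

Definition lin (f : R -> Cx) (c : Cx) (g : R -> Cx) : R -> Cx :=
  fun x => Cadd (f x) (Cmul c (g x)).

Lemma lin_Copp (g f : R -> Cx) (c : Cx) (x : R) :
  lin g (Copp c) f x = Csub (g x) (Cmul c (f x)).
Proof. unfold lin. Csolve. Qed.

Lemma lin_eq0 (z c w : Cx) : Cadd z (Cmul (Copp c) w) = C0 -> z = Cmul c w.
Proof.
  destruct z as [z1 z2], c as [c1 c2], w as [w1 w2].
  unfold Cadd, Cmul, Copp, C0; simpl. intros E; injection E as E1 E2. f_equal; lra.
Qed.

Lemma Cnorm2_neq0 (z : Cx) : z <> C0 -> Cnorm2 z <> 0.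
Proof.
  destruct z as [z1 z2]. unfold Cnorm2, C0; simpl. intros Hz H. apply Hz. f_equal; nra.
Qed.

Lemma Cdiv_mul (e c : Cx) : c <> C0 -> Cmul (Cdiv e c) c = e.
Proof.
  intros Hc. pose proof (Cnorm2_neq0 c Hc) as N.
  destruct c as [c1 c2], e as [e1 e2]. unfold Cnorm2 in N; simpl in N.
  unfold Cdiv, Cmul, Cinv, Cnorm2; simpl. f_equal; field; exact N.
Qed.

Lemma Cdiv_neq0 (e c : Cx) : e <> C0 -> c <> C0 -> Cdiv e c <> C0.
Proof.
  intros He Hc H. apply He. rewrite <- (Cdiv_mul e c Hc), H. Csolve.
Qed.

Definition Cscale (t : R) (z : Cx) : Cx := (t * fst z, t * snd z).

(* A common nonzero real factor cancels in a complex quotient (also for w = 0). *)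
Lemma Cdiv_scale (t : R) (z w : Cx) : t <> 0 -> Cdiv (Cscale t z) (Cscale t w) = Cdiv z w.
Proof.
  intros Ht. destruct z as [z1 z2], w as [w1 w2].
  unfold Cdiv, Cmul, Cinv, Cnorm2, Cscale; simpl.
  destruct (Req_dec (w1 * w1 + w2 * w2) 0) as [H0|H0].
  - assert (w1 = 0) by nra. assert (w2 = 0) by nra. subst. f_equal; unfold Rdiv; ring.
  - assert (Hs : t * w1 * (t * w1) + t * w2 * (t * w2) <> 0).
    { replace (t * w1 * (t * w1) + t * w2 * (t * w2)) with (t * t * (w1 * w1 + w2 * w2)) by ring.
      apply Rmult_integral_contrapositive_currified; [|exact H0].
      apply Rmult_integral_contrapositive_currified; exact Ht. }
    f_equal; field; auto.
Qed.

Lemma Cnorm_lt (z : Cx) (e : R) : Rabs (fst z) < e / 2 -> Rabs (snd z) < e / 2 -> Cnorm z < e.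
Proof.
  intros H1 H2. apply Rabs_def2 in H1, H2.
  unfold Cnorm, Cnorm2. rewrite <- (sqrt_Rsqr e) by lra. unfold Rsqr.
  apply sqrt_lt_1; nra.
Qed.

(** * Derivatives and derivative sequences *)

Lemma is_deriv_lin (f f' g g' : R -> Cx) (c : Cx) :
  is_deriv f f' -> is_deriv g g' -> is_deriv (lin f c g) (lin f' c g').
Proof.
  intros Hf Hg x. destruct (Hf x) as [Hf1 Hf2], (Hg x) as [Hg1 Hg2].
  unfold lin, Cadd, Cmul; simpl. split.
  - apply derivable_pt_lim_plus; auto.
    apply derivable_pt_lim_minus; apply derivable_pt_lim_scal; auto.
  - apply derivable_pt_lim_plus; auto.
    apply derivable_pt_lim_plus; apply derivable_pt_lim_scal; auto.
Qed.

Lemma derseq_lin (f g : R -> Cx) (F G : nat -> R -> Cx) (c : Cx) :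
  derseq f F -> derseq g G -> derseq (lin f c g) (fun j => lin (F j) c (G j)).
Proof.
  intros [HF0 HF] [HG0 HG]. split.
  - intros x. unfold lin. rewrite HF0, HG0. reflexivity.
  - intros j. apply is_deriv_lin; auto.
Qed.

Lemma is_deriv_unique (f g1 g2 : R -> Cx) : is_deriv f g1 -> is_deriv f g2 -> forall x, g1 x = g2 x.
Proof.
  intros H1 H2 x. destruct (H1 x) as [A1 B1], (H2 x) as [A2 B2].
  rewrite (surjective_pairing (g1 x)), (surjective_pairing (g2 x)).
  f_equal; eapply uniqueness_limite; eauto.
Qed.

(* All derivative sequences of f agree, so derivative data do not depend on the witness. *)
Lemma derseq_unique (f : R -> Cx) (F G : nat -> R -> Cx) :
  derseq f F -> derseq f G -> forall j x, F j x = G j x.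
Proof.
  intros [HF0 HF] [HG0 HG] j. induction j as [|j IH]; intros x.
  - rewrite HF0, HG0; reflexivity.
  - assert (E : F j = G j) by (extensionality y; apply IH).
    apply (is_deriv_unique (F j)); [apply HF | rewrite E; apply HG].
Qed.

Lemma derseq_shift (f g : R -> Cx) (F : nat -> R -> Cx) :
  derseq f F -> is_deriv f g -> derseq g (fun j => F (S j)).
Proof.
  intros [HF0 HF] Hg. split; [|intros j; apply HF].
  intros x. apply (is_deriv_unique f); auto.
  replace f with (F 0%nat) by (extensionality y; apply HF0). apply HF.
Qed.

(** * The spaces E_(lam 0..lam m) *)

Lemma ann_lin (lam : nat -> Cx) (m : nat) :
  forall f g c, ann lam m f -> ann lam m g -> ann lam m (lin f c g).
Proof.
  induction m as [|m IH]; intros f g c [f' [Hf Hfa]] [g' [Hg Hga]];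
    exists (lin f' c g'); (split; [apply is_deriv_lin; auto|]).
  - intros x.
    transitivity (Cadd (Csub (f' x) (Cmul (lam 0%nat) (f x)))
                       (Cmul c (Csub (g' x) (Cmul (lam 0%nat) (g x))))).
    + unfold lin. Csolve.
    + rewrite Hfa, Hga. Csolve.
  - replace (fun x => Csub (lin f' c g' x) (Cmul (lam (S m)) (lin f c g x)))
      with (lin (fun x => Csub (f' x) (Cmul (lam (S m)) (f x))) c
                (fun x => Csub (g' x) (Cmul (lam (S m)) (g x)))).
    + apply IH; auto.
    + extensionality x. unfold lin. Csolve.
Qed.

Lemma inE_lin (lam : nat -> Cx) (m : nat) (f g : R -> Cx) (c : Cx) :
  inE lam m f -> inE lam m g -> inE lam m (lin f c g).
Proof.
  intros [[F HF] Hf] [[G HG] Hg]. split.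
  - exists (fun j => lin (F j) c (G j)). apply derseq_lin; auto.
  - apply ann_lin; auto.
Qed.

Lemma op_in_E (lam : nat -> Cx) (m : nat) (f g : R -> Cx) (F : nat -> R -> Cx) :
  inE lam (S m) f -> derseq f F -> is_deriv f g ->
  inE lam m (lin g (Copp (lam (S m))) f) /\
  derseq (lin g (Copp (lam (S m))) f) (fun j => lin (F (S j)) (Copp (lam (S m))) (F j)).
Proof.
  intros [_ [g0 [Hg0 Hann]]] HF Hg.
  assert (HD : derseq (lin g (Copp (lam (S m))) f)
                      (fun j => lin (F (S j)) (Copp (lam (S m))) (F j))).
  { apply derseq_lin; auto. eapply derseq_shift; eauto. }
  split; auto. split; [eexists; exact HD|].
  replace (lin g (Copp (lam (S m))) f) with (fun x => Csub (g0 x) (Cmul (lam (S m)) (f x)));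
    auto.
  extensionality x. rewrite lin_Copp, (is_deriv_unique f g0 g Hg0 Hg x). reflexivity.
Qed.

Lemma op_derivs_at (F : nat -> R -> Cx) (c : Cx) (x0 : R) (r : nat) :
  (forall j, (j < r)%nat -> F j x0 = C0) ->
  forall j, (j < r)%nat -> lin (F (S j)) c (F j) x0 = F (S j) x0.
Proof. intros HF j Hj. unfold lin. rewrite (HF j Hj). Csolve. Qed.

Lemma ECT_zero (lam : nat -> Cx) (m : nat) (a b : R) (f : R -> Cx) (F : nat -> R -> Cx)
    (i j : nat) :
  ECT_ab lam m a b -> inE lam m f -> derseq f F ->
  (forall l, (l < i)%nat -> F l a = C0) -> (forall l, (l < j)%nat -> F l b = C0) ->
  (m < i + j)%nat -> forall x, f x = C0.
Proof.
  intros HE Hf HF Ha Hb Hm x. apply NNPP. intros Hx.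
  enough (i + j <= m)%nat by lia.
  apply (HE f Hf (ex_intro _ x Hx)); exists F; auto.
Qed.

Lemma ECT_unique (lam : nat -> Cx) (m : nat) (a b : R) (f g : R -> Cx) (F G : nat -> R -> Cx)
    (i j : nat) :
  ECT_ab lam m a b -> inE lam m f -> inE lam m g -> derseq f F -> derseq g G ->
  (forall l, (l < i)%nat -> F l a = G l a) -> (forall l, (l < j)%nat -> F l b = G l b) ->
  (m < i + j)%nat -> forall x, f x = g x.
Proof.
  intros HE Hf Hg HF HG Ha Hb Hm x.
  assert (Hx : lin f (Copp Defs.C1) g x = C0).
  { apply (ECT_zero lam m a b _ (fun l => lin (F l) (Copp Defs.C1) (G l)) i j); auto.
    - apply inE_lin; auto.
    - apply derseq_lin; auto.
    - intros l Hl. unfold lin. rewrite Ha by exact Hl. Csolve.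
    - intros l Hl. unfold lin. rewrite Hb by exact Hl. Csolve. }
  apply lin_eq0 in Hx. rewrite Hx. Csolve.
Qed.

(** * A l'Hopital rule at a common zero of finite order *)

Lemma rolle_between (f f' : R -> R) (x y : R) :
  x <> y -> (forall t, derivable_pt_lim f t (f' t)) -> f x = f y ->
  exists t, f' t = 0 /\ 0 < Rabs (t - x) < Rabs (y - x).
Proof.
  intros Hxy HD Hf.
  assert (Hroot : forall u v, u < v -> f u = f v ->
            exists t, f' t = 0 /\ u < t < v).
  { intros u v Huv Hfuv.
    destruct (MVT_cor2 f f' u v Huv (fun t _ => HD t)) as [t [Ht Hut]].
    exists t. split; auto. rewrite Hfuv, Rminus_diag in Ht.
    symmetry in Ht. apply Rmult_integral in Ht. destruct Ht; [auto|lra]. }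
  destruct (Rlt_or_le x y) as [H|H].
  - destruct (Hroot x y H Hf) as [t [Ht Hb]]. exists t.
    rewrite !Rabs_right by lra. split; [auto|lra].
  - destruct (Hroot y x ltac:(lra) (eq_sym Hf)) as [t [Ht Hb]]. exists t.
    rewrite !Rabs_left by lra. split; [auto|lra].
Qed.

Lemma derivable_pt_lim_pow_shift (b : R) (m : nat) (y : R) :
  derivable_pt_lim (fun y => (y - b) ^ S m) y (INR (S m) * (y - b) ^ m).
Proof.
  assert (H1 : derivable_pt_lim (fun y => y - b) y 1).
  { replace 1 with (1 - 0) by ring.
    apply derivable_pt_lim_minus; [apply derivable_pt_lim_id | apply derivable_pt_lim_const]. }
  pose proof (derivable_pt_lim_comp (fun y => y - b) (fun z => z ^ S m) y 1 _ H1
                (derivable_pt_lim_pow (y - b) (S m))) as H.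
  simpl pred in H. rewrite Rmult_1_r in H. exact H.
Qed.

Lemma taylor_lagrange (m : nat) :
  forall (F : nat -> R -> R) (b x : R),
  (forall j y, derivable_pt_lim (F j) y (F (S j) y)) ->
  (forall j, (j < m)%nat -> F j b = 0) ->
  exists xi, Rabs (xi - b) <= Rabs (x - b) /\ F 0%nat x * INR (fact m) = F m xi * (x - b) ^ m.
Proof.
  induction m as [|m IH]; intros F b x HD HZ.
  - exists x. split; [lra|]. simpl. ring.
  - destruct (Req_dec x b) as [->|Hxb].
    { exists b. split; [lra|]. rewrite (HZ 0%nat), Rminus_diag, pow_i by lia. ring. }
    set (G := fun y => (y - b) ^ S m).
    (* Cauchy's trick: phi = G(x) F0 - F0(x) G vanishes at b and at x. *)
    destruct (rolle_between (fun y => G x * F 0%nat y - F 0%nat x * G y)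
                (fun y => G x * F 1%nat y - F 0%nat x * (INR (S m) * (y - b) ^ m)) b x)
      as [eta [Heta [Heta0 Hetax]]].
    + auto.
    + intros y. apply derivable_pt_lim_minus; apply derivable_pt_lim_scal;
        [apply HD | apply derivable_pt_lim_pow_shift].
    + unfold G. rewrite (HZ 0%nat), Rminus_diag, pow_i by lia. ring.
    + destruct (IH (fun j => F (S j)) b eta) as [xi [Hxi Htaylor]];
        [intros; apply HD | intros j Hj; apply HZ; lia |].
      exists xi. split; [lra|]. simpl in Htaylor.
      assert (Hnz : (eta - b) ^ m <> 0).
      { apply pow_nonzero. intros E. rewrite E, Rabs_R0 in Heta0. lra. }
      apply (Rmult_eq_reg_r ((eta - b) ^ m)); [|exact Hnz].
      change (fact (S m)) with (S m * fact m)%nat. rewrite mult_INR.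
      assert (Hphi : F 0%nat x * (INR (S m) * (eta - b) ^ m) = G x * F 1%nat eta)
        by (cbv beta in Heta; lra).
      transitivity (INR (fact m) * (F 0%nat x * (INR (S m) * (eta - b) ^ m))); [ring|].
      rewrite Hphi.
      transitivity (G x * (F 1%nat eta * INR (fact m))); [ring|].
      rewrite Htaylor. unfold G. simpl. ring.
Qed.

Lemma taylor_quotient_limit (F : nat -> R -> R) (m : nat) (b : R) :
  (forall j y, derivable_pt_lim (F j) y (F (S j) y)) ->
  (forall j, (j < m)%nat -> F j b = 0) ->
  limit1_in (fun x => INR (fact m) / (x - b) ^ m * F 0%nat x) (fun x => x <> b) (F m b) b.
Proof.
  intros HD HZ eps Heps.
  pose proof (derivable_continuous_pt (F m) b (exist _ _ (HD m b))) as Hcont.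
  destruct (Hcont eps Heps) as [alp [Halp Hclose]].
  exists alp. split; [exact Halp|]. intros x [Hxb Hx]. simpl in Hx |- *. unfold R_dist in *.
  destruct (taylor_lagrange m F b x HD HZ) as [xi [Hxi Htaylor]].
  replace (INR (fact m) / (x - b) ^ m * F 0%nat x) with (F m xi).
  - destruct (Req_dec xi b) as [->|Hxib].
    + rewrite Rminus_diag, Rabs_R0. lra.
    + apply Hclose. split; [split; [exact I | auto] |]. simpl. unfold R_dist. lra.
  - assert (Hp : (x - b) ^ m <> 0) by (apply pow_nonzero; lra).
    apply (Rmult_eq_reg_r ((x - b) ^ m)); [|exact Hp].
    rewrite <- Htaylor. field. exact Hp.
Qed.

Definition Clim_parts (h : R -> Cx) (b : R) (l : Cx) : Prop :=
  limit1_in (fun x => fst (h x)) (fun x => x <> b) (fst l) b /\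
  limit1_in (fun x => snd (h x)) (fun x => x <> b) (snd l) b.

Lemma Clim_of_parts (h h' : R -> Cx) (b : R) (l : Cx) :
  Clim_parts h' b l -> (forall x, x <> b -> h x = h' x) -> Clim h b l.
Proof.
  intros [H1 H2] Heq eps Heps.
  destruct (H1 (eps / 2) ltac:(lra)) as [d1 [Hd1 Hc1]].
  destruct (H2 (eps / 2) ltac:(lra)) as [d2 [Hd2 Hc2]].
  exists (Rmin d1 d2). split; [apply Rmin_glb_lt; auto|].
  intros x Hxb Hx. rewrite Heq by exact Hxb.
  apply Cnorm_lt; simpl.
  - apply (Hc1 x). split; [exact Hxb|]. simpl. unfold R_dist.
    eapply Rlt_le_trans; [exact Hx | apply Rmin_l].
  - apply (Hc2 x). split; [exact Hxb|]. simpl. unfold R_dist.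
    eapply Rlt_le_trans; [exact Hx | apply Rmin_r].
Qed.

Lemma Clim_parts_Cdiv (r s : R -> Cx) (b : R) (z w : Cx) :
  Clim_parts r b z -> Clim_parts s b w -> w <> C0 ->
  Clim_parts (fun x => Cdiv (r x) (s x)) b (Cdiv z w).
Proof.
  intros [Hr1 Hr2] [Hs1 Hs2] Hw.
  assert (HN : limit1_in (fun x => / Cnorm2 (s x)) (fun x => x <> b) (/ Cnorm2 w) b).
  { apply limit_inv; [|exact (Cnorm2_neq0 w Hw)].
    apply limit_plus; apply limit_mul; assumption. }
  assert (Hq1 : limit1_in (fun x => fst (s x) / Cnorm2 (s x)) (fun x => x <> b)
                          (fst w / Cnorm2 w) b) by (apply limit_mul; assumption).
  assert (Hq2 : limit1_in (fun x => - snd (s x) / Cnorm2 (s x)) (fun x => x <> b)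
                          (- snd w / Cnorm2 w) b).
  { apply limit_mul; [apply limit_Ropp|]; assumption. }
  unfold Clim_parts, Cdiv, Cmul, Cinv; simpl. split.
  - apply limit_minus; apply limit_mul; assumption.
  - apply limit_plus; apply limit_mul; assumption.
Qed.

Lemma Clim_parts_taylor (w : R -> Cx) (W : nat -> R -> Cx) (m : nat) (b : R) :
  derseq w W -> (forall j, (j < m)%nat -> W j b = C0) ->
  Clim_parts (fun x => Cscale (INR (fact m) / (x - b) ^ m) (W 0%nat x)) b (W m b).
Proof.
  intros [_ HWd] HZ. split.
  - apply (taylor_quotient_limit (fun j t => fst (W j t))).
    + intros j y. exact (proj1 (HWd j y)).
    + intros j Hj. simpl. rewrite (HZ j Hj). reflexivity.
  - apply (taylor_quotient_limit (fun j t => snd (W j t))).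
    + intros j y. exact (proj2 (HWd j y)).
    + intros j Hj. simpl. rewrite (HZ j Hj). reflexivity.
Qed.

Lemma lhopital (u v : R -> Cx) (U V : nat -> R -> Cx) (m : nat) (b : R) :
  derseq u U -> derseq v V ->
  (forall j, (j < m)%nat -> U j b = C0) -> (forall j, (j < m)%nat -> V j b = C0) ->
  V m b <> C0 -> Clim (fun x => Cdiv (u x) (v x)) b (Cdiv (U m b) (V m b)).
Proof.
  intros HU HV HUb HVb Hc.
  apply (Clim_of_parts _ (fun x => Cdiv (Cscale (INR (fact m) / (x - b) ^ m) (U 0%nat x))
                                        (Cscale (INR (fact m) / (x - b) ^ m) (V 0%nat x)))).
  - apply Clim_parts_Cdiv;
      [exact (Clim_parts_taylor u U m b HU HUb) | exact (Clim_parts_taylor v V m b HV HVb) | exact Hc].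
  - intros x Hx. rewrite Cdiv_scale, (proj1 HU x), (proj1 HV x); [reflexivity|].
    assert (Hp : (x - b) ^ m <> 0) by (apply pow_nonzero; lra).
    unfold Rdiv. apply Rmult_integral_contrapositive_currified;
      [apply INR_fact_neq_0 | apply Rinv_neq_0_compat; exact Hp].
Qed.

(** * Derivative data of a Bernstein basis *)

Lemma bernstein_smooth (lam : nat -> Cx) (m : nat) (a b : R) (p : nat -> R -> Cx) (k : nat) :
  bernstein_basis lam m a b p -> (k <= m)%nat -> exists P, derseq (p k) P.
Proof. intros Hp Hk. destruct (Hp k Hk) as [[HS _] _]. exact HS. Qed.

Lemma bernstein_derivs (lam : nat -> Cx) (m : nat) (a b : R) (p : nat -> R -> Cx) (k : nat)
    (P : nat -> R -> Cx) :
  bernstein_basis lam m a b p -> (k <= m)%nat -> derseq (p k) P ->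
  inE lam m (p k) /\ (forall j, (j < k)%nat -> P j a = C0) /\ P k a = Defs.C1 /\
  (forall j, (j < m - k)%nat -> P j b = C0) /\ P (m - k)%nat b <> C0.
Proof.
  intros Hp Hk HP.
  destruct (Hp k Hk) as [HE [[A [HA [HA0 _]]] [[B [HB [HB0 HBk]]] [D [HD HD1]]]]].
  split; [exact HE|]. split; [|split; [|split]].
  - intros j Hj. rewrite (derseq_unique _ P A HP HA). auto.
  - rewrite (derseq_unique _ P D HP HD). exact HD1.
  - intros j Hj. rewrite (derseq_unique _ P B HP HB). auto.
  - rewrite (derseq_unique _ P B HP HB). exact HBk.
Qed.

(** * The derivative formula *)

Definition deriv_coeff_spec (lam : nat -> Cx) (n' : nat) (b : R) (p q : nat -> R -> Cx)
    (k : nat) (dk : Cx) : Prop :=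
  dk <> C0 /\
  (forall g, is_deriv (p k) g -> Clim (fun x => Cdiv (g x) (q k x)) b dk) /\
  ((1 <= k)%nat -> forall g, is_deriv (p k) g -> forall x,
     Csub (g x) (Cmul (lam (S n')) (p k x)) = Cadd (q (k - 1)%nat x) (Cmul dk (q k x))) /\
  (k = 0%nat -> forall g, is_deriv (p k) g -> forall x,
     Csub (g x) (Cmul (lam (S n')) (p k x)) = Cmul dk (q k x)).

Section DerivativeFormula.

Variables (lam : nat -> Cx) (n' : nat) (a b : R) (p q : nat -> R -> Cx).
Hypothesis HE' : ECT_ab lam n' a b.
Hypothesis Hp : bernstein_basis lam (S n') a b p.
Hypothesis Hq : bernstein_basis lam n' a b q.

Lemma deriv_limit (k : nat) (P Q : nat -> R -> Cx) (g : R -> Cx) :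
  (k <= n')%nat -> derseq (p k) P -> derseq (q k) Q -> is_deriv (p k) g ->
  Clim (fun x => Cdiv (g x) (q k x)) b (Cdiv (P (S n' - k)%nat b) (Q (n' - k)%nat b)).
Proof.
  intros Hk HP HQ Hg.
  destruct (bernstein_derivs lam (S n') a b p k P Hp ltac:(lia) HP) as [_ [_ [_ [PB _]]]].
  destruct (bernstein_derivs lam n' a b q k Q Hq Hk HQ) as [_ [_ [_ [QB Qc]]]].
  rewrite Nat.sub_succ_l in * by exact Hk.
  apply (lhopital g (q k) (fun j => P (S j)) Q); auto.
  - apply (derseq_shift (p k)); auto.
  - intros j Hj. apply PB. lia.
Qed.

(* d_k <> 0, since p_k and q_k have zeros of exact order n-k and n'-k at b. *)
Lemma deriv_coeff_neq0 (k : nat) (P Q : nat -> R -> Cx) :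
  (k <= n')%nat -> derseq (p k) P -> derseq (q k) Q ->
  Cdiv (P (S n' - k)%nat b) (Q (n' - k)%nat b) <> C0.
Proof.
  intros Hk HP HQ.
  destruct (bernstein_derivs lam (S n') a b p k P Hp ltac:(lia) HP) as [_ [_ [_ [_ Pb]]]].
  destruct (bernstein_derivs lam n' a b q k Q Hq Hk HQ) as [_ [_ [_ [_ Qb]]]].
  apply Cdiv_neq0; assumption.
Qed.

(* k = 0: h_0 and d_0 q_0 agree at b to order n'+1, so h_0 - d_0 q_0 = 0. *)
Lemma identity_first (P Q : nat -> R -> Cx) (g : R -> Cx) :
  derseq (p 0%nat) P -> derseq (q 0%nat) Q -> is_deriv (p 0%nat) g -> forall x,
  Csub (g x) (Cmul (lam (S n')) (p 0%nat x)) =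
  Cmul (Cdiv (P (S n') b) (Q n' b)) (q 0%nat x).
Proof.
  intros HP HQ Hg x.
  destruct (bernstein_derivs lam (S n') a b p 0 P Hp ltac:(lia) HP)
    as [HpE [_ [_ [PB _]]]].
  destruct (bernstein_derivs lam n' a b q 0 Q Hq ltac:(lia) HQ) as [HqE [_ [_ [QB Qb]]]].
  rewrite Nat.sub_0_r in *.
  set (d := Cdiv (P (S n') b) (Q n' b)).
  assert (Hd : Cmul d (Q n' b) = P (S n') b) by (apply Cdiv_mul; exact Qb).
  destruct (op_in_E lam n' (p 0%nat) g P HpE HP Hg) as [HhE HH].
  rewrite <- lin_Copp. apply lin_eq0.
  fold (lin (lin g (Copp (lam (S n'))) (p 0%nat)) (Copp d) (q 0%nat) x).
  apply (ECT_zero lam n' a b _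
           (fun j => lin (lin (P (S j)) (Copp (lam (S n'))) (P j)) (Copp d) (Q j)) 0 (S n') HE');
    [apply inE_lin; auto | apply derseq_lin; auto | intros; lia | | lia].
  intros j Hj. unfold lin at 1. rewrite (op_derivs_at P _ b (S n') PB j) by lia.
  unfold lin. destruct (Nat.lt_ge_cases j n') as [Hlt|Hge].
  - rewrite (PB (S j)), (QB j) by lia. Csolve.
  - assert (j = n') by lia. subst j. rewrite <- Hd. Csolve.
Qed.

(* 1 <= k <= n': h_k and q_(k-1) + d_k q_k have the same derivatives at a to order k and
   at b to order n'-k+1. *)
Lemma identity_interior (k : nat) (P Q : nat -> R -> Cx) (g : R -> Cx) :
  (1 <= k <= n')%nat -> derseq (p k) P -> derseq (q k) Q -> is_deriv (p k) g -> forall x,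
  Csub (g x) (Cmul (lam (S n')) (p k x)) =
  Cadd (q (k - 1)%nat x) (Cmul (Cdiv (P (S n' - k)%nat b) (Q (n' - k)%nat b)) (q k x)).
Proof.
  intros Hk HP HQ Hg x. destruct k as [|k']; [lia|].
  rewrite !Nat.sub_succ, Nat.sub_0_r.
  set (m := (n' - S k')%nat).
  destruct (bernstein_smooth lam n' a b q k' Hq ltac:(lia)) as [Q' HQ'].
  destruct (bernstein_derivs lam (S n') a b p (S k') P Hp ltac:(lia) HP)
    as [HpE [PA [Pa [PB _]]]].
  destruct (bernstein_derivs lam n' a b q (S k') Q Hq ltac:(lia) HQ)
    as [HqE [QA [_ [QB Qb]]]].
  destruct (bernstein_derivs lam n' a b q k' Q' Hq ltac:(lia) HQ')
    as [Hq'E [Q'A [Q'a [Q'B _]]]].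
  rewrite Nat.sub_succ in PB. fold m in QB, Qb.
  replace (n' - k')%nat with (S m) in * by lia.
  set (d := Cdiv (P (S m) b) (Q m b)).
  assert (Hd : Cmul d (Q m b) = P (S m) b) by (apply Cdiv_mul; exact Qb).
  destruct (op_in_E lam n' (p (S k')) g P HpE HP Hg) as [HhE HH].
  rewrite <- lin_Copp. fold (lin (q k') d (q (S k')) x).
  apply (ECT_unique lam n' a b _ _ (fun j => lin (P (S j)) (Copp (lam (S n'))) (P j))
           (fun j => lin (Q' j) d (Q j)) (S k') (S m) HE');
    [auto | apply inE_lin; auto | exact HH | apply derseq_lin; auto | | | lia].
  - intros j Hj. rewrite (op_derivs_at P _ a (S k') PA j Hj).
    unfold lin. rewrite (QA j Hj). destruct (Nat.lt_ge_cases j k') as [Hlt|Hge].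
    + rewrite (PA (S j)), (Q'A j) by lia. Csolve.
    + assert (j = k') by lia. subst j. rewrite Pa, Q'a. Csolve.
  - intros j Hj. rewrite (op_derivs_at P _ b (S m) PB j Hj).
    unfold lin. rewrite (Q'B j Hj). destruct (Nat.lt_ge_cases j m) as [Hlt|Hge].
    + rewrite (PB (S j)), (QB j) by lia. Csolve.
    + assert (j = m) by lia. subst j. rewrite <- Hd. Csolve.
Qed.

(* k = n: h_n and q_n' have the same derivatives at a to order n. *)
Lemma identity_last (g : R -> Cx) :
  is_deriv (p (S n')) g ->
  forall x, Csub (g x) (Cmul (lam (S n')) (p (S n') x)) = q n' x.
Proof.
  intros Hg x.
  destruct (bernstein_smooth lam (S n') a b p (S n') Hp (le_n _)) as [P HP].
  destruct (bernstein_smooth lam n' a b q n' Hq (le_n _)) as [Q HQ].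
  destruct (bernstein_derivs lam (S n') a b p (S n') P Hp (le_n _) HP) as [HpE [PA [Pa _]]].
  destruct (bernstein_derivs lam n' a b q n' Q Hq (le_n _) HQ) as [HqE [QA [Qa _]]].
  destruct (op_in_E lam n' (p (S n')) g P HpE HP Hg) as [HhE HH].
  rewrite <- lin_Copp.
  apply (ECT_unique lam n' a b _ _ _ Q (S n') 0 HE' HhE HqE HH HQ); [| intros; lia | lia].
  intros j Hj. rewrite (op_derivs_at P _ a (S n') PA j Hj).
  destruct (Nat.lt_ge_cases j n') as [Hlt|Hge].
  - rewrite (PA (S j)), (QA j) by lia. reflexivity.
  - assert (j = n') by lia. subst j. rewrite Pa, Qa. reflexivity.
Qed.

Lemma deriv_coeff_exists (k : nat) :
  (k <= n')%nat -> exists dk, deriv_coeff_spec lam n' b p q k dk.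
Proof.
  intros Hk.
  destruct (bernstein_smooth lam (S n') a b p k Hp ltac:(lia)) as [P HP].
  destruct (bernstein_smooth lam n' a b q k Hq Hk) as [Q HQ].
  exists (Cdiv (P (S n' - k)%nat b) (Q (n' - k)%nat b)).
  split; [|split; [|split]].
  - apply deriv_coeff_neq0; auto.
  - intros g Hg. apply deriv_limit; auto.
  - intros Hk1 g Hg. apply identity_interior; auto.
  - intros Hk0 g Hg. subst k. rewrite !Nat.sub_0_r. apply identity_first; auto.
Qed.

End DerivativeFormula.

Theorem mainTheorem8 (lam : nat -> Cx) (n : nat) (a b : R)
  (p q : nat -> R -> Cx)
  (Hn : (1 <= n)%nat) (Hab : a <> b)
  (HE : ECT_ab lam n a b) (HE' : ECT_ab lam (n - 1) a b)
  (Hp : bernstein_basis lam n a b p) (Hq : bernstein_basis lam (n - 1) a b q) :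
  exists d : nat -> Cx,
    (forall k, (k <= n - 1)%nat ->
       d k <> C0 /\
       forall g, is_deriv (p k) g -> Clim (fun x => Cdiv (g x) (q k x)) b (d k)) /\
    (forall k, (1 <= k <= n - 1)%nat -> forall g, is_deriv (p k) g ->
       forall x, Csub (g x) (Cmul (lam n) (p k x)) =
                 Cadd (q (k - 1)%nat x) (Cmul (d k) (q k x))) /\
    (forall g, is_deriv (p 0%nat) g ->
       forall x, Csub (g x) (Cmul (lam n) (p 0%nat x)) = Cmul (d 0%nat) (q 0%nat x)) /\
    (forall g, is_deriv (p n) g ->
       forall x, Csub (g x) (Cmul (lam n) (p n x)) = q (n - 1)%nat x).
Proof.
  destruct n as [|n']; [lia|].
  rewrite Nat.sub_succ, Nat.sub_0_r in *.
  (* Choose d_k for every k; outside 0..n' the value is irrelevant. *)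
  destruct (functional_choice
              (fun k dk => (k <= n')%nat -> deriv_coeff_spec lam n' b p q k dk)) as [d Hd].
  { intros k. destruct (Nat.le_gt_cases k n') as [Hk|Hk].
    - destruct (deriv_coeff_exists lam n' a b p q HE' Hp Hq k Hk) as [dk Hdk].
      exists dk. auto.
    - exists C0. intros; lia. }
  exists d. split; [|split; [|split]].
  - intros k Hk. destruct (Hd k Hk) as [Hneq [Hlim _]]. auto.
  - intros k Hk. apply (Hd k ltac:(lia)). lia.
  - apply (Hd 0%nat ltac:(lia)). reflexivity.
  - apply (identity_last lam n' a b p q HE' Hp Hq).
Qed.
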